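(* Let $\Theta$ be a branch of a tableau of $\mathbf{TAB}_{\mathbf{IB}}$. Suppose $@_i\varphi\in\Theta$ is a quasi-subformula of the root formula of $\Theta$ and $i\in\mathrm{dom}(v_\Theta)$. Then $@_{v_\Theta(i)}\varphi\in\Theta$.
   Context: Hybrid language: fix disjoint countably infinite sets $\mathbf{Prop}$ (propositional variables) and $\mathbf{Nom}$ (nominals). Formulas: $\varphi ::= p \mid i \mid \neg\varphi \mid \varphi\land\varphi \mid \Diamond\varphi \mid @_i\varphi$ with $p\in\mathbf{Prop}$, $i\in\mathbf{Nom}$; $\Box\varphi$ abbreviates $\neg\Diamond\neg\varphi$. Tableau calculus $\mathbf{TAB}_{\mathbf{IB}}$. A tableau is a well-founded tree whose nodes are formulas of the form $@_i\varphi$; its root is a formula $@_i\varphi$ (the root formula) where $i$ does not occur in $\varphi$. A branch is a maximal path; $\varphi\in\Theta$ means $\varphi$ occurs on branch $\Theta$. Each branch is extended by applying the rules below to its formulas as often as possible, except that no further formula is added to a branch once either (i) every new formula generated by applying any rule already occurs on the branch, or (ii) the branch is closed, i.e. contains $@_i\varphi$ and $@_i\neg\varphi$ for some formula $\varphi$ and nominal $i$. An accessibility formula is a formula $@_i\Diamond j$ added by rule $[\Diamond]$ (with $j$ the new nominal). Rules (premises already on the branch; conclusions added to it): [$\neg\neg$] from $@_i\neg\neg\varphi$ add $@_i\varphi$; [$\land$] from $@_i(\varphi\land\psi)$ add $@_i\varphi$ and $@_i\psi$; [$\neg\land$] from $@_i\neg(\varphi\land\psi)$ split the branch into one extended by $@_i\neg\varphi$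 and one extended by $@_i\neg\psi$; [$\Diamond$] from $@_i\Diamond\varphi$, which is not an accessibility formula, add $@_i\Diamond j$ and $@_j\varphi$ where $j$ is a nominal not occurring on the branch; this rule is applied at most once per formula, and only if $i$ is a quasi-urfather on the branch (defined below); [$\neg\Diamond$] from $@_i\neg\Diamond\varphi$ and $@_i\Diamond j$ add $@_j\neg\varphi$; [$\Box_{sym}$] from $@_i\Box\varphi$ and $@_j\Diamond i$ add $@_j\varphi$; [$@$] from $@_i@_j\varphi$ add $@_j\varphi$; [$\neg@$] from $@_i\neg@_j\varphi$ add $@_j\neg\varphi$; [$Id$] from $@_i\varphi$, which is not an accessibility formula, and $@_i j$ add $@_j\varphi$; [$Ref$] for any nominal $i$ occurring on the branch add $@_i i$; ($\mathcal{I}$) for any nominal $i$ occurring on the branch add $@_i\neg\Diamond i$. Auxiliary notions for a branch $\Theta$. $@_i\varphi$ is a quasi-subformula of $@_j\psi$ if $\varphi$ is a subformula of $\psi$, or $\varphi=\neg\chi$ with $\chi$ a subformula of $\psi$. For a nominal $i$ occurring in $\Theta$, $T^\Theta(i)=\{\varphi \mid @_i\varphi\in\Theta$ and $@_i\varphi$ is a quasi-subformula of the root formula$\}$. Nominals $i,j$ are twins if $T^\Theta(i)=T^\Theta(j)$. $i\prec_\Theta j$ if $j$ was introduced by applying $[\Diamond]$ to a formula $@_i\Diamond\varphi$; $\prec_\Theta^*$ is its reflexive transitive closure. A nominal $i$ is a quasi-urfather on $\Theta$ if there are no twins $j\neq k$ with $j\prec_\Theta^* i$ and $k\prec_\Theta^*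 i$. The identity urfather $v_\Theta(i)$ of a nominal $i$ occurring in $\Theta$ is the earliest introduced nominal $j$ on $\Theta$ such that $j$ is a twin of $i$ and $j$ is a quasi-urfather; it may fail to exist, and $\mathrm{dom}(v_\Theta)$ denotes the set of nominals $i$ for which it exists. *)

From Stdlib Require Import List Arith Relations.
Import ListNotations.

Inductive form : Type :=
| Prop_ : nat -> form
| Nom : nat -> form
| Neg : form -> form
| And : form -> form -> form
| Dia : form -> form
| At : nat -> form -> form.

Definition Box (phi : form) : form := Neg (Dia (Neg phi)).

(* A tableau node @_i phi is represented by the pair (i, phi). *)
Definition node : Type := (nat * form)%type.

(* A record of an application of [Dia] to @_i Dia phi introducing the new
   nominal j is represented by the triple (i, phi, j). *)
Definition dstep : Type := (nat * form * nat)%type.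

(* A (partial) branch: the formulas on it, in the order they were added,
   together with the record of all applications of rule [Dia]. *)
Definition state : Type := (list node * list dstep)%type.

Fixpoint noms_form (phi : form) : list nat :=
  match phi with
  | Prop_ _ => []
  | Nom i => [i]
  | Neg a => noms_form a
  | And a b => noms_form a ++ noms_form b
  | Dia a => noms_form a
  | At i a => i :: noms_form a
  end.

Definition noms_node (n : node) : list nat := fst n :: noms_form (snd n).

Definition on_branch (B : state) (n : node) : Prop := In n (fst B).

Definition occurs (B : state) (j : nat) : Prop :=
  exists n, on_branch B n /\ In j (noms_node n).

Definition acc_formula (B : state) (n : node) : Prop :=
  exists i phi j, In (i, phi, j) (snd B) /\ n = (i, Dia (Nom j)).

Inductive subformula : form -> form -> Prop :=
| sub_refl : forall a, subformula a a
| sub_neg : forall a b, subformula a b -> subformula a (Neg b)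
| sub_andl : forall a b c, subformula a b -> subformula a (And b c)
| sub_andr : forall a b c, subformula a c -> subformula a (And b c)
| sub_dia : forall a b, subformula a b -> subformula a (Dia b)
| sub_at : forall a i b, subformula a b -> subformula a (At i b).

(* @_i phi is a quasi-subformula of @_j psi *)
Definition quasi_sub (phi psi : form) : Prop :=
  subformula phi psi \/ exists chi, phi = Neg chi /\ subformula chi psi.

Definition T (r : node) (B : state) (i : nat) (phi : form) : Prop :=
  on_branch B (i, phi) /\ quasi_sub phi (snd r).

Definition twins (r : node) (B : state) (i j : nat) : Prop :=
  occurs B i /\ occurs B j /\ (forall phi, T r B i phi <-> T r B j phi).

Definition prec (B : state) (i j : nat) : Prop :=
  exists phi, In (i, phi, j) (snd B).

Definition prec_star (B : state) : nat -> nat -> Prop :=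
  clos_refl_trans nat (prec B).

Definition quasi_urfather (r : node) (B : state) (i : nat) : Prop :=
  ~ (exists j k, j <> k /\ twins r B j k /\ prec_star B j i /\ prec_star B k i).

Definition occurs_at (B : state) (m j : nat) : Prop :=
  exists n, nth_error (fst B) m = Some n /\ In j (noms_node n).

Definition intro_le (B : state) (j k : nat) : Prop :=
  forall m, occurs_at B m k -> exists m', m' <= m /\ occurs_at B m' j.

(* j is (an) identity urfather v_Theta(i) of i: an earliest introduced
   nominal that is a twin of i and a quasi-urfather. *)
Definition identity_urfather (r : node) (B : state) (i j : nat) : Prop :=
  twins r B i j /\ quasi_urfather r B j /\
  (forall k, twins r B i k -> quasi_urfather r B k -> intro_le B j k).

(* rule_inst r B alts : a rule is applicable on B, and alts lists the
   alternative extensions (one for non-branching rules, two for [~/\]);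
   each alternative gives the formulas added and the [Dia]-records added. *)
Inductive rule_inst (r : node) (B : state) :
  list (list node * list dstep) -> Prop :=
| R_negneg : forall i phi,
    on_branch B (i, Neg (Neg phi)) ->
    rule_inst r B [([(i, phi)], [])]
| R_and : forall i phi psi,
    on_branch B (i, And phi psi) ->
    rule_inst r B [([(i, phi); (i, psi)], [])]
| R_negand : forall i phi psi,
    on_branch B (i, Neg (And phi psi)) ->
    rule_inst r B [([(i, Neg phi)], []); ([(i, Neg psi)], [])]
| R_dia : forall i phi j,
    on_branch B (i, Dia phi) ->
    ~ acc_formula B (i, Dia phi) ->
    (~ exists k, In (i, phi, k) (snd B)) ->   (* at most once per formula *)
    ~ occurs B j ->
    quasi_urfather r B i ->
    rule_inst r B [([(i, Dia (Nom j)); (j, phi)], [(i, phi, j)])]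
| R_negdia : forall i j phi,
    on_branch B (i, Neg (Dia phi)) ->
    on_branch B (i, Dia (Nom j)) ->
    rule_inst r B [([(j, Neg phi)], [])]
| R_boxsym : forall i j phi,
    on_branch B (i, Box phi) ->
    on_branch B (j, Dia (Nom i)) ->
    rule_inst r B [([(j, phi)], [])]
| R_at : forall i j phi,
    on_branch B (i, At j phi) ->
    rule_inst r B [([(j, phi)], [])]
| R_negat : forall i j phi,
    on_branch B (i, Neg (At j phi)) ->
    rule_inst r B [([(j, Neg phi)], [])]
| R_id : forall i j phi,
    on_branch B (i, phi) ->
    ~ acc_formula B (i, phi) ->
    on_branch B (i, Nom j) ->
    rule_inst r B [([(j, phi)], [])]
| R_ref : forall i,
    occurs B i ->
    rule_inst r B [([(i, Nom i)], [])]
| R_irr : forall i,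
    occurs B i ->
    rule_inst r B [([(i, Neg (Dia (Nom i)))], [])].

Definition extend (B : state) (alt : list node * list dstep) : state :=
  (fst B ++ fst alt, snd B ++ snd alt).

Definition step (r : node) (B B' : state) : Prop :=
  exists alts alt, rule_inst r B alts /\ In alt alts /\ B' = extend B alt.

Definition closed (B : state) : Prop :=
  exists i phi, on_branch B (i, phi) /\ on_branch B (i, Neg phi).

Definition saturated (r : node) (B : state) : Prop :=
  forall alts, rule_inst r B alts ->
    exists alt, In alt alts /\ forall n, In n (fst alt) -> on_branch B n.

Definition initial (r : node) : state := ([r], []).

Inductive reach (r : node) : state -> Prop :=
| reach_root : reach r (initial r)
| reach_step : forall B B', reach r B -> ~ closed B -> ~ saturated r B ->
    step r B B' -> reach r B'.

Definition is_branch (r : node) (B : state) : Prop :=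
  ~ In (fst r) (noms_form (snd r)) /\ reach r B /\ (closed B \/ saturated r B).

From Stdlib Require Import List.

Lemma twins_on_branch (r : node) (B : state) (i j : nat) (phi : form) :
  twins r B i j ->
  on_branch B (i, phi) ->
  quasi_sub phi (snd r) ->
  on_branch B (j, phi).
Proof.
  intros [_ [_ HT]] Hon Hq.
  apply (HT phi).
  split; assumption.
Qed.

Lemma identity_urfather_twins (r : node) (B : state) (i j : nat) :
  identity_urfather r B i j -> twins r B i j.
Proof. intros [Htw _]; exact Htw. Qed.

Theorem lemma7 (r : node) (B : state) (i j : nat) (phi : form) :
  is_branch r B ->
  on_branch B (i, phi) ->
  quasi_sub phi (snd r) ->
  identity_urfather r B i j ->
  on_branch B (j, phi).
Proof.
  intros _ Hon Hq Hv.
  exact (twins_on_branch r B i j phi (identity_urfather_twins r B i j Hv) Hon Hq).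
Qed.
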